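(* Let $(X,\mathcal{M})$ and $(U,\mathcal{U})$ be analytic measurable spaces, and let $\mathcal{A}\subseteq\mathcal{M}$ be a $\sigma$-algebra on $X$ and $\mathcal{F},\mathcal{G}\subseteq\mathcal{U}$ be $\sigma$-algebras on $U$. Assume that $\mathcal{A}$, $\mathcal{F}\cap\mathcal{G}$ and $(\mathcal{A}\otimes\mathcal{F})\cap(\mathcal{A}\otimes\mathcal{G})$ are countably generated. Then the following are equivalent: (i) $(\mathcal{A}\otimes\mathcal{F})\cap(\mathcal{A}\otimes\mathcal{G})=\mathcal{A}\otimes(\mathcal{F}\cap\mathcal{G})$; (ii) every atom of $(\mathcal{A}\otimes\mathcal{F})\cap(\mathcal{A}\otimes\mathcal{G})$ is a Cartesian product $B\times D$ with $B\subseteq X$, $D\subseteq U$.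
   Context: A $\sigma$-algebra is countably generated if it is generated by an at most countable family of sets. A measurable space $(X,\mathcal{M})$ is analytic if $X$ is isomorphic (via a bijective bimeasurable map) to an analytic subset of $[0,1]$ (a subset that is the continuous image of a Polish space) with its Borel $\sigma$-algebra, $\mathcal{M}$ is countably generated and $\mathcal{M}$ contains all singletons of $X$. An atom of a $\sigma$-algebra $\mathcal{M}$ is a nonempty set $A\in\mathcal{M}$ such that no proper nonempty subset of $A$ belongs to $\mathcal{M}$. $\otimes$ denotes the product $\sigma$-algebra generated by measurable rectangles. *)

From HB Require Import structures.
From mathcomp Require Import all_boot all_order all_algebra.
From mathcomp Require Import all_classical all_reals all_analysis.
Set Implicit Arguments. Unset Strict Implicit. Unset Printing Implicit Defensive.
Import Order.TTheory GRing.Theory Num.Theory.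
Local Open Scope classical_set_scope.
Local Open Scope ring_scope.

Definition is_metric (R : realType) (P : Type) (d : P -> P -> R) : Prop :=
  [/\ forall x y, 0 <= d x y,
      forall x y, d x y = 0 <-> x = y,
      forall x y, d x y = d y x &
      forall x y z, d x z <= d x y + d y z].

Definition metric_complete (R : realType) (P : Type) (d : P -> P -> R) : Prop :=
  forall u : nat -> P,
    (forall e : R, 0 < e -> exists N : nat, forall m n : nat,
        (N <= m)%N -> (N <= n)%N -> d (u m) (u n) < e) ->
    exists l : P, forall e : R, 0 < e -> exists N : nat, forall n : nat,
        (N <= n)%N -> d (u n) l < e.

Definition metric_separable (R : realType) (P : Type) (d : P -> P -> R) : Prop :=
  exists D : set P, countable D /\
    forall x e, 0 < e -> exists2 y, D y & d x y < e.

Definition polish_metric (R : realType) (P : Type) (d : P -> P -> R) : Prop :=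
  [/\ is_metric d, metric_complete d & metric_separable d].

Definition metric_continuous (R : realType) (P : Type) (d : P -> P -> R)
    (g : P -> R) : Prop :=
  forall x (e : R), 0 < e -> exists2 delta : R, 0 < delta &
    forall y, d x y < delta -> `|g x - g y| < e.

Definition analytic_set (R : realType) (S : set R) : Prop :=
  exists (P : Type) (d : P -> P -> R) (g : P -> R),
    [/\ polish_metric d, metric_continuous d g & range g = S].

Definition is_sigma_algebra (X : Type) (M : set (set X)) : Prop :=
  sigma_algebra setT M.

Definition countably_generated (X : Type) (M : set (set X)) : Prop :=
  exists G : set (set X), countable G /\ M = <<s G >>.

(** Analytic measurable space (X, M): M is countably generated, contains
    singletons, and X is isomorphic (bijective bimeasurable map) to an
    analytic subset S of [0,1] with its Borel sigma-algebra (trace of the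
    Borel sets of R on S). *)
Definition analytic_mspace (R : realType) (X : Type) (M : set (set X)) : Prop :=
  [/\ is_sigma_algebra M, countably_generated M, (forall x : X, M [set x]) &
    exists (S : set R) (f : X -> R),
      [/\ analytic_set S /\ S `<=` `[0, 1],
          injective f, range f = S,
          (forall B : set R, measurable B -> M (f @^-1` B)) &
          (forall E : set X, M E -> exists2 B : set R, measurable B &
               f @` E = B `&` S)]].

Definition prod_sigma (X U : Type) (A : set (set X)) (F : set (set U))
  : set (set (X * U)) :=
  <<s [set C | exists A1 F1, [/\ A A1, F F1 & C = A1 `*` F1]] >>.

Definition is_atom (T : Type) (H : set (set T)) (C : set T) : Prop :=
  [/\ H C, C !=set0 &
      forall B, H B -> B `<=` C -> B = set0 \/ B = C].

From mathcomp Require Import all_boot all_order all_algebra.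
From mathcomp Require Import all_classical all_reals all_analysis.
From mathcomp Require Import lra.
Import Order.TTheory GRing.Theory Num.Theory.
Local Open Scope classical_set_scope.

(* The direct implication holds for every product sigma-algebra A ⊗ B: a set
   of A ⊗ B meeting an atom contains it, so the atom through (x0, u0) is the
   product of the classes of x0 and u0 modulo the sets of A and of B.

   Conversely, let H = (A ⊗ F) ∩ (A ⊗ G) and K = A ⊗ (F ∩ G), so that
   K is included in H and both are countably generated.  An atom of H is a
   rectangle whose sections lie in A, F and G, hence it belongs to K: every set
   of H is a union of atoms of K.  As H is included in the analytic
   sigma-algebra M ⊗ UU, Blackwell's theorem yields H = K.

   Blackwell's theorem is proved in Cantor space: r |-> (r < q_i)_i, with
   (q_i) an enumeration of the rationals, codes an analytic space by a map
   with analytic range (the Souslin operation applied to closed sets) under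
   which measurable sets are preimages of Borel sets.  Mapping through the
   characteristic bits of the generators of K, a set of H and its complement
   have disjoint analytic images, which Lusin's separation theorem separates
   by a Borel set; its preimage is the set itself, and lies in K. *)

(** * Sigma-algebras *)

Section sigma_algebra_setT.
Context {T : Type} {S : set (set T)}.
Hypothesis sS : sigma_algebra setT S.

Lemma sigma_set0 : S set0. Proof. by case: sS. Qed.

Lemma sigma_setC A : S A -> S (~` A).
Proof. by case: sS => _ h _ /h; rewrite setTD. Qed.

Lemma sigma_setT : S setT. Proof. by rewrite -setC0; exact/sigma_setC/sigma_set0. Qed.

Lemma sigma_bigcup (A : (set T)^nat) : (forall n, S (A n)) -> S (\bigcup_n A n).
Proof. by case: sS => _ _; apply. Qed.

Lemma sigma_bigcap (A : (set T)^nat) : (forall n, S (A n)) -> S (\bigcap_n A n).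
Proof.
move=> SA; rewrite -[X in S X]setCK setC_bigcap.
by apply/sigma_setC/sigma_bigcup => n; exact/sigma_setC.
Qed.

Lemma sigma_setU A B : S A -> S B -> S (A `|` B).
Proof.
by move=> SA SB; rewrite -bigcup2E; apply: sigma_bigcup => -[|[|n]] //=; exact: sigma_set0.
Qed.

Lemma sigma_setI A B : S A -> S B -> S (A `&` B).
Proof.
by move=> SA SB; rewrite -[X in S X]setCK setCI; apply/sigma_setC/sigma_setU; exact/sigma_setC.
Qed.

End sigma_algebra_setT.

Lemma sigma_algebraI {T : Type} {S1 S2 : set (set T)} :
  sigma_algebra setT S1 -> sigma_algebra setT S2 -> sigma_algebra setT (S1 `&` S2).
Proof.
move=> [a1 b1 c1] [a2 b2 c2]; split => //.
  by move=> A [h1 h2]; split; [exact: b1|exact: b2].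
by move=> A hA; split; [apply: c1 => n; exact: (hA n).1|apply: c2 => n; exact: (hA n).2].
Qed.

Lemma preimage_g_sigma {aT rT : Type} (f : aT -> rT) {S : set (set aT)}
    {G : set (set rT)} :
  sigma_algebra setT S -> (forall B, G B -> S (f @^-1` B)) ->
  forall B, <<s G >> B -> S (f @^-1` B).
Proof.
move=> sS GS B GB.
suff : image_set_system setT f S B by rewrite /image_set_system /= setTI.
apply: smallest_sub (sigma_algebra_image f sS) _ _ GB => A GA.
by rewrite /image_set_system /= setTI; exact: GS.
Qed.

Lemma g_sigma_pullback {aT rT : Type} (f : aT -> rT) {S : set (set rT)}
    {G : set (set aT)} :
  sigma_algebra setT S -> (forall E, G E -> exists2 C, S C & E = f @^-1` C) ->
  forall E, <<s G >> E -> exists2 C, S C & E = f @^-1` C.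
Proof.
move=> sS GS E GE.
have : preimage_set_system setT f S E.
  apply: smallest_sub (sigma_algebra_preimage setT f sS) _ _ GE => A /GS [C SC ->].
  by exists C => //; rewrite setTI.
by case=> C SC <-; exists C; rewrite ?setTI.
Qed.

Lemma g_sigma_inseparable {T : Type} {G : set (set T)} {W : set T} {y y' : T} :
  <<s G >> W -> (forall B, G B -> (B y <-> B y')) -> (W y <-> W y').
Proof.
move=> GW Gyy; suff : <<s G >> `<=` [set W | W y <-> W y'] by move/(_ W GW).
apply: smallest_sub => //; split => //.
- by move=> B hB; rewrite setTD /=; split => h1 h2; apply: h1; exact/hB.
- by move=> B hB; split => -[n _ h]; exists n => //; exact/(hB n).
Qed.

Lemma atom_sub {T : Type} {S : set (set T)} {C W : set T} y :
  sigma_algebra setT S -> is_atom S C -> S W -> C y -> W y -> C `<=` W.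
Proof.
move=> sS [SC _ atC] SW Cy Wy.
have [CW0|CWC] := atC (C `&` W) (sigma_setI sS _ _ SC SW) (@subIsetl _ _ _).
  by have : (C `&` W) y by []; rewrite CW0.
by move=> z Cz; have [] : (C `&` W) z by rewrite CWC.
Qed.

(** * Cantor space *)

Definition cantor := nat -> bool.

Definition agree (a b : cantor) m := forall i, (i < m)%N -> a i = b i.

Definition cantor_closed (C : set cantor) :=
  forall a, (forall m, exists b, C b /\ agree a b m) -> C a.

Definition determined (C : set cantor) m := forall a b, agree a b m -> C a -> C b.

Lemma determined_closed C m : determined C m -> cantor_closed C.
Proof. by move=> h a /(_ m) [b [Cb ab]]; apply: (h b a) Cb => i im; rewrite (ab i im). Qed.

Lemma closed_bigcap {I : Type} (C : I -> set cantor) :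
  (forall i, cantor_closed (C i)) -> cantor_closed [set a | forall i, C i a].
Proof. by move=> h a ha i; apply: h => m; have [b [Cb ab]] := ha m; exists b. Qed.

Lemma closed_implies (P : Prop) C : cantor_closed C -> cantor_closed [set a | P -> C a].
Proof.
by move=> h a ha p; apply: h => m; have [b [Cb ab]] := ha m; exists b; split => //; apply: Cb.
Qed.

Lemma closed0 : cantor_closed set0.
Proof. by move=> a /(_ 0%N) [b []]. Qed.

Lemma closedI C D : cantor_closed C -> cantor_closed D -> cantor_closed (C `&` D).
Proof.
move=> cC cD; have -> : C `&` D = [set a | forall b : bool, (if b then C else D) a].
  by apply/seteqP; split => [a [Ca Da] []|a h] //; split; [exact: (h true)|exact: (h false)].
by apply: closed_bigcap => -[].
Qed.

Definition set_bit (b : cantor) m (v : bool) : cantor :=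
  fun i => if i == m then v else b i.

Lemma set_bit_id (a : cantor) m : set_bit a m (a m) = a.
Proof. by apply/funext => i; rewrite /set_bit; case: eqP => // ->. Qed.

Lemma agree_set_bit b c m v : agree b c m -> c m = v -> agree (set_bit b m v) c m.+1.
Proof.
move=> bc cv i; rewrite ltnS leq_eqVlt => /orP[/eqP->|im]; rewrite /set_bit.
  by rewrite eqxx.
by rewrite (ltn_eqF im) bc.
Qed.

Lemma agree_set_bit2 a b m v : agree a b m -> agree (set_bit a m v) (set_bit b m v) m.+1.
Proof.
move=> ab i; rewrite ltnS leq_eqVlt => /orP[/eqP ->|im]; rewrite /set_bit ?eqxx //.
by rewrite (ltn_eqF im) ab.
Qed.

(* Koenig's lemma: the bits of the common point are chosen greedily, keeping
   every D k reachable from the current prefix. *)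
Lemma cantor_compact (D : nat -> set cantor) :
  (forall k, cantor_closed (D k)) -> (forall k, D k !=set0) ->
  (forall k l, (k <= l)%N -> D l `<=` D k) -> exists a, forall k, D k a.
Proof.
move=> cD nD mD.
pose good (b : cantor) m := forall k, exists c, D k c /\ agree b c m.
pose next (b : cantor) (m : nat) :=
  if pselect (good (set_bit b m true) m.+1) then set_bit b m true else set_bit b m false.
have good_next b m : good b m -> good (next b m) m.+1.
  move=> gb; rewrite /next; case: pselect => // ngt.
  have [k1 hk1] : exists k1, ~ exists c, D k1 c /\ agree (set_bit b m true) c m.+1.
    by apply: contrapT => h; apply: ngt => k; apply: contrapT => h2; apply: h; exists k.
  move=> k; have [c [Dc bc]] := gb (maxn k k1).
  exists c; split; first by apply: mD Dc; rewrite leq_maxl.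
  apply: agree_set_bit => //; case cm: (c m) => //; exfalso.
  apply: hk1; exists c; split; first by apply: mD Dc; rewrite leq_maxr.
  exact: agree_set_bit.
pose fix bs m := if m is m'.+1 then next (bs m') m' else (fun _ => false).
have good_bs m : good (bs m) m.
  elim: m => [|m ih] /=; last exact: good_next.
  by move=> k; case: (nD k) => c Dc; exists c.
have bs_stable m l i : (i < m)%N -> (m <= l)%N -> bs l i = bs m i.
  move=> im; elim: l => [|l ih]; first by rewrite leqn0 => /eqP ->.
  rewrite leq_eqVlt => /orP[/eqP <-//|]; rewrite ltnS => ml.
  rewrite -ih //= /next; have il : (i < l)%N by apply: leq_trans ml.
  by case: ifP => _; rewrite /set_bit (ltn_eqF il).
exists (fun i => bs i.+1 i) => k; apply: cD => m.
have [c [Dc bc]] := good_bs m k; exists c; split => // i im.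
by rewrite -(bc i im) (bs_stable i.+1 m i).
Qed.

Definition cyl n (v : bool) : set cantor := [set a | a n = v].

Definition cylinders : set (set cantor) := [set C | exists n v, C = cyl n v].

Definition cantor_borel : set (set cantor) := <<s cylinders >>.

Lemma sigma_cantor_borel : sigma_algebra setT cantor_borel.
Proof. exact: smallest_sigma_algebra. Qed.

Lemma borel_cyl n v : cantor_borel (cyl n v).
Proof. by apply: sub_sigma_algebra; exists n, v. Qed.

Lemma determined_cyl n v : determined (cyl n v) n.+1.
Proof. by move=> a b ab; rewrite /cyl /= (ab n (ltnSn n)). Qed.

Lemma determined_borel m C : determined C m -> cantor_borel C.
Proof.
elim: m C => [|m ih] C dC.
  have [[a Ca]|nC] := pselect (C !=set0).
    have -> : C = setT by apply/seteqP; split => // b _; apply: (dC a b) Ca.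
    exact: (sigma_setT sigma_cantor_borel).
  have -> : C = set0 by apply/seteqP; split => // b Cb; apply: nC; exists b.
  exact: (sigma_set0 sigma_cantor_borel).
have dv v : determined [set a | C (set_bit a m v)] m.
  by move=> a b ab; apply: dC; exact: agree_set_bit2.
have -> : C = (cyl m true `&` [set a | C (set_bit a m true)]) `|`
              (cyl m false `&` [set a | C (set_bit a m false)]).
  apply/seteqP; split => a.
    by move=> Ca; case am: (a m); [left|right]; split => //=; rewrite -am set_bit_id.
  by case=> -[/= am]; rewrite -am set_bit_id.
by apply: (sigma_setU sigma_cantor_borel); apply: (sigma_setI sigma_cantor_borel);
  [exact: borel_cyl|exact: ih|exact: borel_cyl|exact: ih].
Qed.

Lemma closed_borel C : cantor_closed C -> cantor_borel C.
Proof.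
move=> cC.
have -> : C = \bigcap_m [set a | exists b, C b /\ agree a b m].
  apply/seteqP; split => [a Ca m _|a h]; first by exists a.
  by apply: cC => m; apply: h.
apply: (sigma_bigcap sigma_cantor_borel) => m; apply: (@determined_borel m) => a b ab [c [Cc ac]].
by exists c; split => // i im; rewrite -ac // ab.
Qed.

(** * Souslin sets and Lusin's separation theorem *)

Lemma eq_in_mkseq {T : Type} (f g : nat -> T) l :
  (forall j, (j < l)%N -> f j = g j) -> mkseq f l = mkseq g l.
Proof. by move=> fg; apply/eq_in_map => j; rewrite mem_iota => /fg. Qed.

Lemma take_mkseq {T : Type} (f : nat -> T) j k : (j <= k)%N -> take j (mkseq f k) = mkseq f j.
Proof.
elim: k => [|k ih]; first by rewrite leqn0 => /eqP ->.
rewrite leq_eqVlt => /orP[/eqP ->|]; first by rewrite take_oversize // size_mkseq.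
by rewrite ltnS => jk; rewrite mkseqS -cats1 takel_cat ?size_mkseq // ih.
Qed.

Lemma mkseqSl {T : Type} (f : nat -> T) k :
  mkseq f k.+1 = f 0%N :: mkseq (fun i => f i.+1) k.
Proof. by elim: k => [//|k ih]; rewrite mkseqS ih rcons_cons -mkseqS. Qed.

Lemma ubound_nat (f : nat -> nat) l : exists k, forall j, (j < l)%N -> (f j < k)%N.
Proof.
elim: l => [|l [k hk]]; first by exists 0%N.
exists (maxn k (f l).+1) => j; rewrite ltnS leq_eqVlt => /orP[/eqP ->|jl].
  by rewrite leq_max leqnn orbT.
by rewrite leq_max hk.
Qed.

Definition souslin (F : seq nat -> set cantor) : set cantor :=
  [set a | exists sg : nat -> nat, forall k, F (mkseq sg k) a].

Definition cantor_analytic (Z : set cantor) :=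
  exists F, (forall s, cantor_closed (F s)) /\ Z = souslin F.

Definition monotone_scheme (F : seq nat -> set cantor) :=
  forall s j, (j <= size s)%N -> F s `<=` F (take j s).

Lemma monotone_scheme_mkseq F (sg : nat -> nat) k l : monotone_scheme F ->
  (k <= l)%N -> F (mkseq sg l) `<=` F (mkseq sg k).
Proof. by move=> mF kl; rewrite -(@take_mkseq _ sg k l kl); apply: mF; rewrite size_mkseq. Qed.

Lemma analytic_monotone Z : cantor_analytic Z ->
  exists F, [/\ forall s, cantor_closed (F s), monotone_scheme F & Z = souslin F].
Proof.
move=> [F [cF ->]].
exists (fun s => [set a | forall j, (j <= size s)%N -> F (take j s) a]); split.
- by move=> s; apply: closed_bigcap => j; apply: closed_implies.
- move=> s j js a h j' j'j; rewrite size_take in j'j.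
  rewrite take_takel; [apply: h|]; apply: (leq_trans j'j); by rewrite ?geq_minl ?geq_minr.
- apply/seteqP; split => a [sg h]; exists sg => k.
    by move=> j; rewrite size_mkseq => jk; rewrite take_mkseq.
  by have := h k k; rewrite size_mkseq take_mkseq //; apply.
Qed.

Lemma analytic_closed C : cantor_closed C -> cantor_analytic C.
Proof.
move=> cC; exists (fun _ => C); split => //.
by apply/seteqP; split => [a Ca|a [sg h]]; [exists (fun _ => 0%N)|exact: (h 0%N)].
Qed.

Lemma analytic_bigcup (Z : nat -> set cantor) :
  (forall n, cantor_analytic (Z n)) -> cantor_analytic (\bigcup_n Z n).
Proof.
move=> /choice [Fs hF].
exists (fun s => if s is n :: s' then Fs n s' else setT); split.
  by case=> [|n s] //; case: (hF n).
apply/seteqP; split => a.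
  move=> [n _]; rewrite (proj2 (hF n)) => -[sg hs].
  exists (fun k => if k is k'.+1 then sg k' else n) => -[|k] //.
  by rewrite mkseqSl; exact: hs.
move=> [sg hs]; exists (sg 0%N) => //; rewrite (proj2 (hF _)).
exists (fun i => sg i.+1) => k; specialize (hs k.+1).
by rewrite mkseqSl in hs.
Qed.

(* The countably many branches are interleaved along the pairing [pickle]. *)
Lemma analytic_bigcap (Z : nat -> set cantor) :
  (forall n, cantor_analytic (Z n)) -> cantor_analytic (\bigcap_n Z n).
Proof.
move=> /choice [Fs hF].
exists (fun s => [set a | forall n l,
  (forall j, (j < l)%N -> (pickle (n, j) < size s)%N) ->
  Fs n (mkseq (fun j => nth 0%N s (pickle (n, j))) l) a]); split.
  move=> s; apply: closed_bigcap => n; apply: closed_bigcap => l; apply: closed_implies.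
  by case: (hF n).
apply/seteqP; split => a.
  move=> ha.
  have /choice [sgs hsgs] n : exists sg : nat -> nat, forall k, Fs n (mkseq sg k) a.
    by have := ha n I; rewrite (proj2 (hF n)).
  exists (fun k => if @unpickle (nat * nat)%type k is Some nj then sgs nj.1 nj.2 else 0%N).
  move=> k n l hl; rewrite size_mkseq in hl.
  rewrite (@eq_in_mkseq _ _ (sgs n)) // => j jl.
  by rewrite nth_mkseq ?hl // pickleK.
move=> [sg hs] n _; rewrite (proj2 (hF n)).
exists (fun j => sg (pickle (n, j))) => l.
have [k hk] := ubound_nat (fun j => pickle (n, j)) l.
have := hs k n l; rewrite size_mkseq => /(_ hk).
by rewrite (@eq_in_mkseq _ _ (fun j => sg (pickle (n, j)))) // => j jl; rewrite nth_mkseq ?hk.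
Qed.

Lemma analytic_setI A B : cantor_analytic A -> cantor_analytic B -> cantor_analytic (A `&` B).
Proof.
move=> hA hB; have -> : A `&` B = \bigcap_n (if n is 0%N then A else B).
  apply/seteqP; split => [a [Aa Ba] [|n] _ //|a h].
  by split; [exact: (h 0%N I)|exact: (h 1%N I)].
by apply: analytic_bigcap => -[|n].
Qed.

Lemma analytic_setU A B : cantor_analytic A -> cantor_analytic B -> cantor_analytic (A `|` B).
Proof.
move=> hA hB; rewrite -bigcup2E; apply: analytic_bigcup => -[|[|n]] //=.
exact/analytic_closed/closed0.
Qed.

Lemma closed_preimage (r : nat -> nat) C :
  cantor_closed C -> cantor_closed [set a : cantor | C (a \o r)].
Proof.
move=> cC a ha; apply: cC => m; have [K hK] := ubound_nat r m.
have [b [Cb ab]] := ha K; exists (b \o r); split => // i im /=.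
exact: ab (hK i im).
Qed.

Lemma analytic_preimage (r : nat -> nat) Z :
  cantor_analytic Z -> cantor_analytic [set a : cantor | Z (a \o r)].
Proof.
move=> [F [cF ->]]; exists (fun s => [set a : cantor | F s (a \o r)]); split => //.
by move=> s; apply: closed_preimage.
Qed.

Lemma closed_fiber (r : nat -> nat) (a : cantor) : cantor_closed [set z : cantor | z \o r = a].
Proof.
have -> : [set z : cantor | z \o r = a] = [set z | forall i, [set z : cantor | z (r i) = a i] z].
  by apply/seteqP; split => [z <- //|z h]; apply/funext => i; apply: h.
apply: closed_bigcap => i; apply: (@determined_closed _ (r i).+1) => z w zw /= <-.
by rewrite zw.
Qed.

Lemma closed_image (r : nat -> nat) C :
  cantor_closed C -> cantor_closed ((fun z : cantor => z \o r) @` C).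
Proof.
move=> cC a ha.
have [z hz] : exists z, forall m, [set z | C z /\ agree a (z \o r) m] z.
  apply: cantor_compact.
  - move=> m; apply: closedI => //; have [K hK] := ubound_nat r m.
    by apply: (@determined_closed _ K) => z w zw h i im /=; rewrite -zw ?h ?hK.
  - by move=> m; have [b [[z Cz <-] ab]] := ha m; exists z.
  - by move=> k l kl z [Cz h]; split => // i ik; apply: h; exact: leq_trans kl.
exists z; first by case: (hz 0%N).
by apply/funext => i; case: (hz i.+1) => _ /(_ i (ltnSn i)).
Qed.

Lemma analytic_image (r : nat -> nat) Z :
  cantor_analytic Z -> cantor_analytic ((fun z : cantor => z \o r) @` Z).
Proof.
move=> /analytic_monotone [F [cF mF ->]].
exists (fun s => (fun z : cantor => z \o r) @` F s); split; first by move=> s; apply: closed_image.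
apply/seteqP; split => a.
  by move=> [z [sg hz] <-]; exists sg => k; exists z.
move=> [sg hs].
have [z hz] : exists z, forall k, [set z | F (mkseq sg k) z /\ z \o r = a] z.
  apply: cantor_compact.
  - by move=> k; apply: closedI => //; apply: closed_fiber.
  - by move=> k; have [z Fz <-] := hs k; exists z.
  - by move=> k l kl z [Fz zr]; split => //; apply: monotone_scheme_mkseq Fz.
by exists z; [exists sg => k; case: (hz k)|case: (hz 0%N)].
Qed.

Lemma analytic_borel C : cantor_borel C -> cantor_analytic C /\ cantor_analytic (~` C).
Proof.
have : cantor_borel `<=` [set C | cantor_analytic C /\ cantor_analytic (~` C)].
  apply: smallest_sub.
    split.
    - by split; [exact/analytic_closed/closed0|rewrite setC0; exact: analytic_closed].
    - by move=> A [h1 h2]; rewrite /= setTD setCK.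
    - move=> A hA; split; first by apply: analytic_bigcup => n; case: (hA n).
      by rewrite setC_bigcup; apply: analytic_bigcap => n; case: (hA n).
  move=> _ [n [v ->]]; split; apply/analytic_closed/(@determined_closed _ n.+1).
    exact: determined_cyl.
  move=> a b ab nCa Cb; apply: nCa; apply: (@determined_cyl n v b a) Cb => i ilt.
  exact/esym/ab.
by move=> h /h.
Qed.

Definition borel_separated (Z1 Z2 : set cantor) :=
  exists C, [/\ cantor_borel C, Z1 `<=` C & C `&` Z2 `<=` set0].

Lemma separated_bigcup (Z1 Z2 : nat -> set cantor) :
  (forall n m, borel_separated (Z1 n) (Z2 m)) ->
  borel_separated (\bigcup_n Z1 n) (\bigcup_m Z2 m).
Proof.
move=> h; have [Cs hC] := choice (fun nm : nat * nat => h nm.1 nm.2).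
exists (\bigcup_n \bigcap_m Cs (n, m)); split.
- apply: (sigma_bigcup sigma_cantor_borel) => n.
  by apply: (sigma_bigcap sigma_cantor_borel) => m; case: (hC (n, m)).
- by move=> a [n _ Za]; exists n => // m _; case: (hC (n, m)) => _ /(_ a Za).
- move=> a [[n _ hn] [m _ Za]]; case: (hC (n, m)) => _ _ /(_ a); apply; split => //.
  exact: hn.
Qed.

Definition souslin_at (F : seq nat -> set cantor) (s : seq nat) : set cantor :=
  [set a | exists sg, mkseq sg (size s) = s /\ forall k, F (mkseq sg k) a].

Lemma souslin_at_nil F : souslin_at F [::] = souslin F.
Proof. by apply/seteqP; split => a [sg h]; exists sg => //; case: h. Qed.

Lemma souslin_at_rcons F s : souslin_at F s = \bigcup_n souslin_at F (rcons s n).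
Proof.
apply/seteqP; split => a.
  move=> [sg [hs h]]; exists (sg (size s)) => //; exists sg; split => //.
  by rewrite size_rcons mkseqS hs.
move=> [n _ [sg [hs h]]]; exists sg; split => //.
by move: hs; rewrite size_rcons mkseqS => /rcons_inj [].
Qed.

Lemma souslin_at_sub F s : souslin_at F s `<=` F s.
Proof. by move=> a [sg [hs h]]; rewrite -hs; apply: h. Qed.

(* A pair of non-separated pieces always splits into a non-separated pair of
   sub-pieces (by [separated_bigcup]), which yields a pair of branches. *)
Lemma nonseparated_branches F1 F2 :
  ~ borel_separated (souslin F1) (souslin F2) ->
  exists sg ts : nat -> nat, forall k,
    ~ borel_separated (souslin_at F1 (mkseq sg k)) (souslin_at F2 (mkseq ts k)).
Proof.
move=> nS.
have step (p : seq nat * seq nat) : exists nm : nat * nat,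
    ~ borel_separated (souslin_at F1 p.1) (souslin_at F2 p.2) ->
    ~ borel_separated (souslin_at F1 (rcons p.1 nm.1)) (souslin_at F2 (rcons p.2 nm.2)).
  have [sp|sp] := pselect (borel_separated (souslin_at F1 p.1) (souslin_at F2 p.2)).
    by exists (0%N, 0%N).
  apply: contrapT => h; apply: sp; rewrite (souslin_at_rcons F1) (souslin_at_rcons F2).
  apply: separated_bigcup => n m; apply: contrapT => hnm; apply: h.
  by exists (n, m).
have [st hst] := choice step.
pose fix pr k := if k is k'.+1 then
   (rcons (pr k').1 (st (pr k')).1, rcons (pr k').2 (st (pr k')).2)
  else ([::], [::]).
pose sg j := nth 0%N (pr j.+1).1 j.
pose ts j := nth 0%N (pr j.+1).2 j.
have prE k : pr k = (mkseq sg k, mkseq ts k).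
  elim: k => [//|k ih]; rewrite !mkseqS /sg /ts /= ih /=.
  by rewrite !nth_rcons !size_mkseq ltnn eqxx.
exists sg, ts; elim=> [|k ih]; first by rewrite !souslin_at_nil.
by have := hst (pr k); rewrite prE /= => /(_ ih); have := prE k.+1; rewrite /= prE => -[<- <-].
Qed.

Lemma lusin_separation Z1 Z2 : cantor_analytic Z1 -> cantor_analytic Z2 ->
  Z1 `&` Z2 `<=` set0 -> borel_separated Z1 Z2.
Proof.
move=> /analytic_monotone [F1 [cF1 mF1 ->]] /analytic_monotone [F2 [cF2 mF2 ->]] dis.
apply: contrapT => /nonseparated_branches [sg [ts nS]].
have [meet|] := pselect (forall k, (F1 (mkseq sg k) `&` F2 (mkseq ts k)) !=set0).
  have mono k l : (k <= l)%N ->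
      F1 (mkseq sg l) `&` F2 (mkseq ts l) `<=` F1 (mkseq sg k) `&` F2 (mkseq ts k).
    move=> kl a [h1 h2].
    by split; [exact: monotone_scheme_mkseq h1|exact: monotone_scheme_mkseq h2].
  have [a ha] := @cantor_compact _ (fun k => @closedI _ _ (cF1 _) (cF2 _)) meet mono.
  by apply: (dis a); split; [exists sg|exists ts] => k; case: (ha k).
move=> /existsNP [k hk]; apply: (nS k); exists (F1 (mkseq sg k)); split.
- exact: closed_borel.
- exact: souslin_at_sub.
- by move=> a [h1 /souslin_at_sub h2]; apply: hk; exists a.
Qed.

(** * Blackwell's theorem *)

Definition odd_index (i : nat) : nat := i.*2.+1.

Definition interleave (b a : cantor) : cantor :=
  fun i => if odd i then a i./2 else b i./2.

Lemma interleave_even b a : interleave b a \o double = b.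
Proof. by apply/funext => i; rewrite /interleave /= odd_double doubleK. Qed.

Lemma interleave_odd b a : interleave b a \o odd_index = a.
Proof. by apply/funext => i; rewrite /interleave /odd_index /= odd_double /= uphalf_double. Qed.

Lemma interleaveK z : interleave (z \o double) (z \o odd_index) = z.
Proof.
apply/funext => i; rewrite /interleave /odd_index /=.
by case: (boolP (odd i)) => oi; congr z; rewrite -[RHS]odd_double_half ?oi ?(negbTE oi).
Qed.

Lemma borel_preimage (r : nat -> nat) C :
  cantor_borel C -> cantor_borel [set a : cantor | C (a \o r)].
Proof.
move=> BC; apply: (@preimage_g_sigma _ _ _ _ cylinders sigma_cantor_borel) BC.
by move=> _ [n [v ->]]; exact: borel_cyl.
Qed.

Definition bit_code {T : Type} (k : nat -> set T) (y : T) : cantor :=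
  fun n => `[< k n y >].

(* The image is the projection of the (analytic) graph of the map. *)
Lemma analytic_image_bit_code (Cs : nat -> set cantor) Z :
  (forall n, cantor_borel (Cs n)) -> cantor_analytic Z -> cantor_analytic (bit_code Cs @` Z).
Proof.
move=> hC hZ.
pose W := [set z : cantor | Z (z \o odd_index)] `&` \bigcap_n
  ((cyl n.*2 true `&` [set z : cantor | Cs n (z \o odd_index)]) `|`
   (cyl n.*2 false `&` [set z : cantor | (~` Cs n) (z \o odd_index)])).
have -> : bit_code Cs @` Z = (fun z : cantor => z \o double) @` W.
  apply/seteqP; split => b.
    move=> [a Za <-]; exists (interleave (bit_code Cs a) a); last first.
      exact: interleave_even.
    split; first by rewrite /= interleave_odd.
    move=> n _; rewrite /= interleave_odd /cyl /= /interleave /bit_code odd_double doubleK.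
    by case: asboolP => h; [left|right]; split.
  move=> [z [Zz hz] <-]; exists (z \o odd_index) => //.
  apply/funext => n; have := hz n I; rewrite /cyl /bit_code /=.
  by case=> -[-> h]; case: asboolP.
have analytic_cyl n v : cantor_analytic (cyl n v).
  exact/analytic_closed/(@determined_closed _ n.+1)/determined_cyl.
apply: analytic_image; apply: analytic_setI; first exact: analytic_preimage.
apply: analytic_bigcap => n; apply: analytic_setU; apply: analytic_setI => //.
- exact: (analytic_preimage _ _ (analytic_borel _ (hC n)).1).
- exact: (analytic_preimage _ _ (analytic_borel _ (hC n)).2).
Qed.

Definition analytic_coding {T : Type} (S : set (set T)) (c : T -> cantor) :=
  cantor_analytic (range c) /\ forall E, S E -> exists2 C, cantor_borel C & E = c @^-1` C.

Definition indistinguishable {T : Type} (k : nat -> set T) (y y' : T) :=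
  forall n, k n y <-> k n y'.

Lemma g_sigma_bit_code {T : Type} (k : nat -> set T) C :
  cantor_borel C -> <<s range k >> (bit_code k @^-1` C).
Proof.
move=> BC; apply: (@preimage_g_sigma _ _ _ _ cylinders (smallest_sigma_algebra _ _)) BC.
move=> _ [n [v ->]].
have -> : bit_code k @^-1` cyl n v = if v then k n else ~` k n.
  by apply/seteqP; split => y; rewrite /cyl /bit_code /=; case: v; case: asboolP.
have kn : <<s range k >> (k n) by apply: sub_sigma_algebra; exists n.
by case: v => //; exact: (sigma_setC (smallest_sigma_algebra _ _)).
Qed.

(* The Borel set separating the (analytic) images of [E] and of its complement
   under the code of [k] pulls back to a set generated by [k]. *)
Lemma blackwell {T : Type} {S : set (set T)} {c : T -> cantor} {k : nat -> set T} {E : set T} :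
  analytic_coding S c -> (forall n, S (k n)) -> S E ->
  (forall y y', indistinguishable k y y' -> E y -> E y') ->
  <<s range k >> E.
Proof.
move=> [Ac Sc] Sk /Sc [CE SCE ECE] sat.
have Ec y : E y <-> CE (c y) by rewrite ECE.
have /choice [Cs hCs] n : exists C, cantor_borel C /\ k n = c @^-1` C.
  by have [C SC ->] := Sc _ (Sk n); exists C.
pose Phi := bit_code Cs.
have codeE y : bit_code k y = Phi (c y).
  by apply/funext => n; rewrite /Phi /bit_code (proj2 (hCs n)).
have Aimg D : cantor_borel D -> cantor_analytic (Phi @` (range c `&` D)).
  move=> SD; apply: analytic_image_bit_code; first by move=> n; case: (hCs n).
  by apply: analytic_setI => //; exact: (analytic_borel _ SD).1.
have [C [SC EC CnE]] : borel_separated (Phi @` (range c `&` CE)) (Phi @` (range c `&` ~` CE)).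
  apply: lusin_separation; first exact: Aimg.
    by apply: Aimg; exact: (sigma_setC sigma_cantor_borel _ SCE).
  move=> _ [[_ [[y1 _ <-] C1] <-] [_ [[y2 _ <-] C2] e12]].
  apply/C2/Ec/(sat y1); last exact/Ec.
  move=> n; rewrite !(proj2 (hCs n)) /=; apply: asbool_eq_equiv.
  exact: (congr1 (fun f => f n) (esym e12)).
suff -> : E = bit_code k @^-1` C by exact: g_sigma_bit_code.
apply/seteqP; split => y /=; rewrite codeE.
  by move=> /Ec Ey; apply: EC; exists (c y) => //; split => //; exists y.
move=> Cy; apply: contrapT => /Ec nEy; apply: (CnE (Phi (c y))); split => //.
by exists (c y) => //; split => //; exists y.
Qed.

(** * Coding analytic spaces into Cantor space *)

Section rational_code.
Context {R : realType}.
Local Open Scope ring_scope.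

Definition rat_enum (i : nat) : R := ratr (odflt 0%R (@unpickle rat i)).

Definition rat_code (r : R) : cantor := fun i => r < rat_enum i.

Lemma rat_enum_pickle (q : rat) : rat_enum (pickle q) = ratr q.
Proof. by rewrite /rat_enum pickleK. Qed.

Lemma borel_rat_code (B : set R) : measurable B ->
  exists2 C, cantor_borel C & B = rat_code @^-1` C.
Proof.
move=> mB; have {}mB : <<s @measurable_realfun.RGenInftyO.G R >> B.
  exact: eq_ind _ id mB _ (congr1 (fun S => S B) (measurable_realfun.RGenInftyO.measurableE R)).
apply: (g_sigma_pullback rat_code sigma_cantor_borel _ _ mB) => _ [x ->].
exists (\bigcup_i (if rat_enum i < x then cyl i true else set0)).
  apply: (sigma_bigcup sigma_cantor_borel) => i.
  by case: ifP => _; [exact: borel_cyl|exact: (sigma_set0 sigma_cantor_borel)].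
apply/seteqP; split => r; rewrite /= in_itv /=.
  move=> rx; have [q] := rat_in_itvoo rx; rewrite in_itv /= => /andP[rq qx].
  by exists (pickle q) => //; rewrite rat_enum_pickle qx /cyl /rat_code /= rat_enum_pickle.
move=> [i _]; case: ifP => // qx; rewrite /cyl /rat_code /= => rq.
exact: lt_trans rq qx.
Qed.

Lemma approx_ltr (r q t : R) (b : bool) : 0 < t ->
  (forall eps, 0 < eps -> exists y, `|r - y| < eps /\ (b -> y <= q - t) /\ (~~ b -> q <= y)) ->
  (r < q) = b.
Proof.
move=> t0 approx; case: b approx => approx.
  have : r <= q - t.
    apply/ler_addgt0Pr => eps eps0; have [y [ry [yq _]]] := approx eps eps0.
    have := yq isT; have := ltr_distlDr ry; lra.
  lra.
apply/negbTE; rewrite -leNgt; apply/ler_addgt0Pr => eps eps0.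
have [y [ry [_ qy]]] := approx eps eps0.
have := qy isT; have := ltr_distlCDr ry; lra.
Qed.

Definition dyadic (k : nat) : R := (2 ^+ k)^-1.

Lemma dyadic_gt0 k : 0 < dyadic k.
Proof. by rewrite invr_gt0 exprn_gt0. Qed.

Lemma dyadicS k : dyadic k.+1 = dyadic k / 2.
Proof. by rewrite /dyadic exprS invfM mulrC. Qed.

Lemma dyadic_le k l : (k <= l)%N -> dyadic l <= dyadic k.
Proof.
elim: l => [|l ih]; first by rewrite leqn0 => /eqP ->.
rewrite leq_eqVlt => /orP[/eqP -> //|]; rewrite ltnS => /ih h.
by rewrite dyadicS; have := dyadic_gt0 l; lra.
Qed.

Lemma dyadic_small e : 0 < e -> exists k, dyadic k < e.
Proof.
move=> e0; have [k hk] := ltr_add_invr e0; exists k.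
apply: le_lt_trans hk; rewrite add0r /dyadic lef_pV2 ?posrE ?exprn_gt0 //.
by rewrite -natrX ler_nat ltn_expl.
Qed.

End rational_code.

Section polish_code.
Context {R : realType} {P : Type} (d : P -> P -> R).
Local Open Scope ring_scope.
Hypothesis metric_d : is_metric d.

Let d_refl x : d x x = 0. Proof. by case: metric_d => _ /(_ x x) [_ ->]. Qed.
Let d_sym x y : d x y = d y x. Proof. by case: metric_d. Qed.
Let d_triangle x y z : d x z <= d x y + d y z. Proof. by case: metric_d. Qed.

Lemma separable_seq (p0 : P) : metric_separable d ->
  exists e : nat -> P, forall x eps, 0 < eps -> exists n, d x (e n) < eps.
Proof.
move=> [D [/pfcard_geP[D0|/surjfunPex[f Df]] dD]].
  by have [y Dy _] := dD p0 1 ltr01; rewrite D0 in Dy.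
exists f => x eps eps0; have [y Dy hy] := dD x eps eps0.
by rewrite Df in Dy; case: Dy => n _ fy; exists n; rewrite fy.
Qed.

Lemma fast_cauchy_limit (x : nat -> P) : metric_complete d ->
  (forall j, d (x j) (x j.+1) < dyadic j) ->
  exists p, forall j, d (x j) p <= 2 * dyadic j.
Proof.
move=> complete_d step.
have cauchy j l : (j <= l)%N -> d (x j) (x l) <= 2 * dyadic j - 2 * dyadic l.
  elim: l => [|l ih]; first by rewrite leqn0 => /eqP ->; rewrite d_refl subrr.
  rewrite leq_eqVlt => /orP[/eqP <-|]; first by rewrite d_refl subrr.
  rewrite ltnS => /ih h; have := d_triangle (x j) (x l) (x l.+1).
  by have := step l; rewrite dyadicS; lra.
have [p hp] : exists p, forall eps, 0 < eps -> exists N, forall k, (N <= k)%N ->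
    d (x k) p < eps.
  apply: complete_d => eps eps0.
  have [N hN] : exists N, dyadic N < eps / 4 by apply: dyadic_small; lra.
  exists N => k l Nk Nl; have := d_triangle (x k) (x N) (x l).
  rewrite [d (x k) (x N)]d_sym; have := cauchy _ _ Nk; have := cauchy _ _ Nl.
  by have := @dyadic_gt0 R k; have := @dyadic_gt0 R l; lra.
exists p => j; apply/ler_addgt0Pr => eps eps0; have [N hN] := hp eps eps0.
have := d_triangle (x j) (x (maxn j N)) p.
have := hN _ (leq_maxr j N); have := cauchy j _ (leq_maxl j N).
by have := @dyadic_gt0 R (maxn j N); lra.
Qed.

Variables (e : nat -> P) (g : P -> R).

Let decode (v : nat) : nat * nat := odflt (0%N, 0%N) (unpickle v).
Let center (s : seq nat) j := e (decode (nth 0%N s j)).1.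
Let margin (s : seq nat) j : R := ((decode (nth 0%N s j)).2.+1%:R)^-1.

(* The entries of a node [s] are pickled pairs [(n_j, m_j)]: the centers
   [e n_j] of balls of radius [2 * dyadic j] shrinking to a point [p], and, for
   each bit [i], a point of the last ball on the side of [rat_enum i] where
   [g p] lies (with margin [1 / (m_i + 1)] on the left). *)
Definition polish_scheme (s : seq nat) : set cantor :=
  [set a : cantor | (0 < size s)%N ->
   (forall j, (j.+1 < size s)%N -> d (center s j) (center s j.+1) < dyadic j) /\
   (forall i, (i < size s)%N ->
      (a i -> exists y, d (center s (size s).-1) y <= 2 * dyadic (size s).-1
              /\ g y <= rat_enum i - margin s i) /\
      (~~ a i -> exists y, d (center s (size s).-1) y <= 2 * dyadic (size s).-1
              /\ rat_enum i <= g y))].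

Lemma polish_scheme_closed s : cantor_closed (polish_scheme s).
Proof.
apply: (@determined_closed _ (size s)) => a b ab h hs.
by have [h1 h2] := h hs; split => // i iS; rewrite -(ab i iS); exact: h2.
Qed.

Lemma polish_scheme_complete p : (forall x eps, 0 < eps -> exists n, d x (e n) < eps) ->
  souslin polish_scheme (rat_code (g p)).
Proof.
move=> dense_e.
have [nk hnk] : {nk : nat -> nat & forall k, d p (e (nk k)) < dyadic k.+2}.
  exact: (choice (fun k => dense_e p _ (@dyadic_gt0 R k.+2))).
have [mi hmi] : {mi : nat -> nat &
    forall i, g p < rat_enum i -> g p <= rat_enum i - ((mi i).+1%:R)^-1}.
  apply: (choice (P := fun i m => g p < rat_enum i -> g p <= rat_enum i - (m.+1%:R)^-1)) => i.
  have [gi|_] := boolP (g p < rat_enum i); last by exists 0%N.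
  have [m hm] := ltr_add_invr gi; exists m => _; move: hm.
  by generalize (m.+1%:R^-1 : R) => t; lra.
exists (fun k => pickle (nk k, mi k)) => K; rewrite /polish_scheme /= size_mkseq => K0.
have decodeE j : (j < K)%N ->
    decode (nth 0%N (mkseq (fun k => pickle (nk k, mi k)) K) j) = (nk j, mi j).
  by move=> jK; rewrite nth_mkseq // /decode pickleK.
have K1 : (K.-1 < K)%N by rewrite prednK.
have near_p : d (center (mkseq (fun k => pickle (nk k, mi k)) K) K.-1) p <= 2 * dyadic K.-1.
  rewrite /center decodeE // d_sym; have := hnk K.-1; rewrite !dyadicS.
  by have := @dyadic_gt0 R K.-1; lra.
split.
  move=> j jK; rewrite /center !decodeE //; last exact: ltnW.
  have := d_triangle (e (nk j)) p (e (nk j.+1)); have := d_sym (e (nk j)) p.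
  by have := hnk j; have := hnk j.+1; rewrite !dyadicS; have := @dyadic_gt0 R j; lra.
move=> i iK; split => [gi|ngi]; exists p; split => //.
  by rewrite /margin decodeE //; exact: hmi.
by rewrite leNgt.
Qed.

Lemma polish_scheme_sound a : metric_complete d -> metric_continuous d g ->
  souslin polish_scheme a -> exists p, a = rat_code (g p).
Proof.
move=> complete_d cont_g [sg hs].
pose n j := (decode (sg j)).1; pose m j := (decode (sg j)).2.
have [p near_p] : exists p, forall j, d (e (n j)) p <= 2 * dyadic j.
  apply: fast_cauchy_limit => // j; have := hs j.+2; rewrite /polish_scheme size_mkseq.
  by move=> /(_ isT) [+ _] => /(_ j (ltnSn _)); rewrite /center !nth_mkseq.
exists p; apply/funext => i; apply/esym/(@approx_ltr _ _ _ ((m i).+1%:R^-1)).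
  by rewrite invr_gt0 ltr0Sn.
move=> eps eps0; have [del del0 hdel] := cont_g p eps eps0.
have [k hk] : exists k, dyadic k < del / 4 by apply: dyadic_small; lra.
have := hs (maxn k i).+1; rewrite /polish_scheme size_mkseq => /(_ isT) [_ /(_ i)].
rewrite ltnS leq_maxr => /(_ isT); rewrite /center /margin /= !nth_mkseq ?ltnS ?leq_maxr //.
have close y : d (e (n (maxn k i))) y <= 2 * dyadic (maxn k i) -> d p y < del.
  move=> hy; have := d_triangle p (e (n (maxn k i))) y; rewrite [d p (e _)]d_sym.
  by have := near_p (maxn k i); have := @dyadic_le R _ _ (leq_maxl k i); lra.
case: (a i) => -[h1 h2].
  by have [y [/close/hdel hy1 hy2]] := h1 isT; exists (g y).
by have [y [/close/hdel hy1 hy2]] := h2 isT; exists (g y).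
Qed.

End polish_code.

Lemma analytic_polish_image {R : realType} {P : Type} (d : P -> P -> R) (g : P -> R) :
  polish_metric d -> metric_continuous d g ->
  cantor_analytic (range (fun p => rat_code (g p))).
Proof.
move=> [metric_d complete_d separable_d] cont_g.
have [[p0 _]|nP] := pselect (exists p : P, True); last first.
  have -> : range (fun p => rat_code (g p)) = set0.
    by apply/seteqP; split => // a [p _]; case: nP; exists p.
  exact/analytic_closed/closed0.
have [e dense_e] := separable_seq d p0 separable_d.
exists (polish_scheme d e g); split; first exact: polish_scheme_closed.
apply/seteqP; split => a.
  by move=> [p _ <-]; exact: polish_scheme_complete.
by move=> /(polish_scheme_sound d metric_d e g _ complete_d cont_g) [p ->]; exists p.
Qed.

Lemma analytic_mspace_coding {R : realType} {X : Type} {M : set (set X)} :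
  analytic_mspace R M -> exists c : X -> cantor, analytic_coding M c.
Proof.
move=> [_ _ _ [S [f [[[P [d [g [polish_d cont_g rg]]]] _] finj rf _ fiso]]]].
exists (fun x => rat_code (f x)); split.
  suff -> : range (fun x => rat_code (f x)) = range (fun p => rat_code (g p)).
    exact: analytic_polish_image polish_d cont_g.
  by rewrite -(image_comp f rat_code) -(image_comp g rat_code) rf rg.
move=> E /fiso [B mB fE]; have [C SC BC] := borel_rat_code _ mB.
exists C => //; have -> : (fun x => rat_code (f x)) @^-1` C = f @^-1` B by rewrite BC.
apply/seteqP; split => x /= => [Ex|Bfx].
  have : (f @` E) (f x) by exists x.
  by rewrite fE => -[].
have : (B `&` S) (f x) by split => //; rewrite -rf; exists x.
by rewrite -fE => -[x' Ex' /finj <-].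
Qed.

Lemma prod_analytic_coding {X U : Type} {M : set (set X)} {UU : set (set U)}
    {cX : X -> cantor} {cU : U -> cantor} :
  analytic_coding M cX -> analytic_coding UU cU ->
  analytic_coding (prod_sigma M UU) (fun y : X * U => interleave (cX y.1) (cU y.2)).
Proof.
move=> [AX hX] [AU hU]; split.
  have -> : range (fun y : X * U => interleave (cX y.1) (cU y.2)) =
      [set z : cantor | range cX (z \o double)] `&`
      [set z : cantor | range cU (z \o odd_index)].
    apply/seteqP; split => z.
      move=> [[x u] _ <-]; split => /=.
        by exists x => //; rewrite interleave_even.
      by exists u => //; rewrite interleave_odd.
    by move=> [[x _ ex] [u _ eu]]; exists (x, u) => //=; rewrite ex eu interleaveK.
  by apply: analytic_setI; apply: analytic_preimage.
apply: g_sigma_pullback sigma_cantor_borel _.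
move=> _ [A1 [F1 [/hX [C1 S1 ->] /hU [C2 S2 ->] ->]]].
exists ([set z : cantor | C1 (z \o double)] `&` [set z : cantor | C2 (z \o odd_index)]).
  by apply: (sigma_setI sigma_cantor_borel); apply: borel_preimage.
by apply/seteqP; split => -[x u] /=; rewrite interleave_even interleave_odd.
Qed.

(** * Product sigma-algebras *)

Lemma countably_generated_range {T : Type} (S : set (set T)) :
  countably_generated S ->
  exists k : nat -> set T, S = <<s range k >>.
Proof.
move=> [G [/pfcard_geP[G0|/surjfunPex[k Gk]] SG]].
  exists (fun _ => set0); rewrite SG G0; apply/seteqP; split.
    by apply: smallest_sub; [exact: smallest_sigma_algebra|].
  apply: smallest_sub; first exact: smallest_sigma_algebra.
  by move=> _ [n _ <-]; exact: sigma_algebra0.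
by exists k; rewrite SG Gk.
Qed.

Lemma prod_sigma_mono {X U : Type} (A A' : set (set X)) (F F' : set (set U)) :
  A `<=` A' -> F `<=` F' -> prod_sigma A F `<=` prod_sigma A' F'.
Proof.
move=> AA FF; apply: sub_sigma_algebra2 => _ [A1 [F1 [hA hF ->]]].
by exists A1, F1; split; [exact: AA|exact: FF|].
Qed.

Lemma prod_sigma_setI_sub {X U : Type} (A : set (set X)) (F G : set (set U)) :
  prod_sigma A (F `&` G) `<=` prod_sigma A F `&` prod_sigma A G.
Proof.
by move=> W KW; split; apply: prod_sigma_mono KW => // B [].
Qed.

Lemma countably_generated_prod_sigma {X U : Type} (A : set (set X)) (B : set (set U)) :
  sigma_algebra setT A -> sigma_algebra setT B ->
  countably_generated A -> countably_generated B -> countably_generated (prod_sigma A B).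
Proof.
move=> sA sB /countably_generated_range [ka Aka] /countably_generated_range [kb Bkb].
pose k n : set (X * U) := if odd n then setT `*` kb n./2 else ka n./2 `*` setT.
exists (range k); split.
  exact: sub_countable (card_image_le k setT) (countableP setT).
have sk : sigma_algebra setT <<s range k >> by exact: smallest_sigma_algebra.
apply/seteqP; split; last first.
  apply: smallest_sub; first exact: smallest_sigma_algebra.
  move=> _ [n _ <-]; rewrite /k; case: (odd n); apply: sub_sigma_algebra.
    exists setT, (kb n./2); split => //; first exact: sigma_setT.
    by rewrite Bkb; exact: sub_sigma_algebra.
  exists (ka n./2), setT; split => //; last exact: sigma_setT.
  by rewrite Aka; exact: sub_sigma_algebra.
apply: smallest_sub => // _ [A1 [F1 [hA hF ->]]].
have -> : A1 `*` F1 = fst @^-1` A1 `&` snd @^-1` F1 by apply/seteqP; split => -[x u] [].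
apply: (sigma_setI sk).
  rewrite Aka in hA; apply: (preimage_g_sigma fst sk _ _ hA) => _ [m _ <-].
  by apply: sub_sigma_algebra; exists m.*2 => //; rewrite /k odd_double doubleK setXT.
rewrite Bkb in hF; apply: (preimage_g_sigma snd sk _ _ hF) => _ [m _ <-].
by apply: sub_sigma_algebra; exists m.*2.+1 => //; rewrite /k /= odd_double /= uphalf_double setTX.
Qed.

Lemma indistinguishable_atom {T : Type} (k : nat -> set T) y :
  is_atom <<s range k >> [set z | indistinguishable k z y].
Proof.
have sk : sigma_algebra setT <<s range k >> by exact: smallest_sigma_algebra.
have kn n : <<s range k >> (k n) by apply: sub_sigma_algebra; exists n.
split; last 1 first.
- move=> B SB BAt; have [[y1 By1]|nB] := pselect (B !=set0); last first.
    by left; apply/seteqP; split => // z Bz; apply: nB; exists z.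
  right; apply/seteqP; split => // z Atz.
  apply: (g_sigma_inseparable SB _).1 (By1) => _ [n _ <-].
  by have := BAt _ By1 n; have := Atz n; tauto.
- suff -> : [set z | indistinguishable k z y] =
      \bigcap_n (if `[< k n y >] then k n else ~` k n).
    by apply: (sigma_bigcap sk) => n; case: asboolP => _; [|apply: (sigma_setC sk)].
  apply/seteqP; split => z /=.
    by move=> h n _; case: asboolP => hy; [apply/h|move=> /h].
  move=> h n; have := h n I; case: asboolP => hy; first by split.
  by move=> hz; split => // /hz.
- by exists y.
Qed.

Lemma saturated_of_atoms {T : Type} (hk k : nat -> set T) :
  (forall C, is_atom <<s range hk >> C -> <<s range k >> C) ->
  forall E, <<s range hk >> E -> forall y y', indistinguishable k y y' -> E y -> E y'.
Proof.
move=> atomsK E HE y y' kyy'.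
have /atomsK KAt := indistinguishable_atom hk y.
have hkyy' : indistinguishable hk y' y.
  have hkyy : indistinguishable hk y y by move=> n; split.
  by apply: (g_sigma_inseparable KAt _).1 hkyy => _ [n _ <-]; exact: kyy'.
by apply/(g_sigma_inseparable HE _).1 => _ [n _ <-]; split => /hkyy'.
Qed.

Lemma prod_sigma_atom_rectangle {X U : Type} (A : set (set X)) (B : set (set U)) C :
  sigma_algebra setT A -> sigma_algebra setT B ->
  is_atom (prod_sigma A B) C -> exists B0 D0, C = B0 `*` D0.
Proof.
move=> sA sB atC; have [KC [[x0 u0] C0] _] := atC.
have sK : sigma_algebra setT (prod_sigma A B) by exact: smallest_sigma_algebra.
have atom_same W y : prod_sigma A B W -> C y -> (W y <-> W (x0, u0)).
  move=> KW Cy; split => Wy; first exact: (atom_sub y sK atC KW Cy Wy).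
  exact: (atom_sub (x0, u0) sK atC KW C0 Wy).
exists [set x | forall a, A a -> (a x <-> a x0)], [set u | forall b, B b -> (b u <-> b u0)].
apply/seteqP; split => [[x u] Cxu|[x u] [/= hx hu]].
  split => /= [a Aa|b Bb].
    have Ka : prod_sigma A B (a `*` setT).
      by apply: sub_sigma_algebra; exists a, setT; split => //; exact: sigma_setT.
    by have := atom_same _ _ Ka Cxu => /=; tauto.
  have Kb : prod_sigma A B (setT `*` b).
    by apply: sub_sigma_algebra; exists setT, b; split => //; exact: sigma_setT.
  by have := atom_same _ _ Kb Cxu => /=; tauto.
apply: (g_sigma_inseparable KC _).1 C0 => _ [A1 [B1 [hA hB ->]]] /=.
by have := hx _ hA; have := hu _ hB; tauto.
Qed.

Lemma prod_sigma_section1 {X U : Type} (A : set (set X)) (F : set (set U)) W u :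
  sigma_algebra setT A -> prod_sigma A F W -> A [set x | W (x, u)].
Proof.
move=> sA KW; apply: (preimage_g_sigma (fun x => (x, u)) sA _ _ KW).
move=> _ [A1 [F1 [hA _ ->]]]; have [F1u|nF1u] := pselect (F1 u).
  by have -> : (fun x => (x, u)) @^-1` (A1 `*` F1) = A1 by apply/seteqP; split => x /= => [[]|].
have -> : (fun x => (x, u)) @^-1` (A1 `*` F1) = set0 by apply/seteqP; split => x /= => [[]|].
exact: sigma_set0.
Qed.

Lemma prod_sigma_section2 {X U : Type} (A : set (set X)) (F : set (set U)) W x :
  sigma_algebra setT F -> prod_sigma A F W -> F [set u | W (x, u)].
Proof.
move=> sF KW; apply: (preimage_g_sigma (fun u => (x, u)) sF _ _ KW).
move=> _ [A1 [F1 [_ hF ->]]]; have [A1x|nA1x] := pselect (A1 x).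
  by have -> : (fun u => (x, u)) @^-1` (A1 `*` F1) = F1 by apply/seteqP; split => u /= => [[]|].
have -> : (fun u => (x, u)) @^-1` (A1 `*` F1) = set0 by apply/seteqP; split => u /= => [[]|].
exact: sigma_set0.
Qed.

(* A nonempty rectangle is determined by its two sections through any of its
   points, and these sections lie in A, F and G. *)
Lemma rectangle_atom_prod_sigma_setI {X U : Type} (A : set (set X)) (F G : set (set U))
    (C : set (X * U)) :
  sigma_algebra setT A -> sigma_algebra setT F -> sigma_algebra setT G ->
  is_atom (prod_sigma A F `&` prod_sigma A G) C -> (exists B0 D0, C = B0 `*` D0) ->
  prod_sigma A (F `&` G) C.
Proof.
move=> sA sF sG [[KF KG] [[x0 u0] Cxu] _] [B0 [D0 CBD]].
have -> : C = [set x | C (x, u0)] `*` [set u | C (x0, u)].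
  by move: Cxu; rewrite CBD => -[Bx0 Du0]; apply/seteqP; split => -[x u] /=; tauto.
apply: sub_sigma_algebra; do 2 eexists; split; last reflexivity.
- exact: prod_sigma_section1 sA KF.
- by split; [exact: prod_sigma_section2 sF KF|exact: prod_sigma_section2 sG KG].
Qed.

Theorem theorem3p3 (R : realType) (X U : Type)
  (M : set (set X)) (UU : set (set U))
  (A : set (set X)) (F G : set (set U)) :
  analytic_mspace R M -> analytic_mspace R UU ->
  is_sigma_algebra A -> A `<=` M ->
  is_sigma_algebra F -> F `<=` UU ->
  is_sigma_algebra G -> G `<=` UU ->
  countably_generated A ->
  countably_generated (F `&` G) ->
  countably_generated (prod_sigma A F `&` prod_sigma A G) ->
  (prod_sigma A F `&` prod_sigma A G = prod_sigma A (F `&` G) <->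
   forall C : set (X * U), is_atom (prod_sigma A F `&` prod_sigma A G) C ->
     exists (B : set X) (D : set U), C = B `*` D).
Proof.
move=> aM aU sA AM sF FU sG _ cgA cgFG cgH.
have sFG := sigma_algebraI sF sG.
split=> [-> C|atomsH]; first exact: prod_sigma_atom_rectangle sA sFG.
apply/seteqP; split; last exact: prod_sigma_setI_sub.
set H := prod_sigma A F `&` prod_sigma A G in cgH atomsH *.
have [hk Hhk] := countably_generated_range _ cgH.
have [k Kk] := countably_generated_range _
  (countably_generated_prod_sigma _ _ sA sFG cgA cgFG).
have [cX codeX] := analytic_mspace_coding aM.
have [cU codeU] := analytic_mspace_coding aU.
have HMU W : H W -> prod_sigma M UU W by move=> [KW _]; exact: prod_sigma_mono KW.
have Kkn n : prod_sigma A (F `&` G) (k n) by rewrite Kk; apply: sub_sigma_algebra; exists n.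
move=> E HE; rewrite Kk; apply: blackwell (prod_analytic_coding codeX codeU) _ (HMU _ HE) _.
  by move=> n; apply: HMU; apply: prod_sigma_setI_sub; exact: Kkn.
apply: (saturated_of_atoms hk); last by rewrite -Hhk.
move=> C; rewrite -Hhk -Kk => atomC.
exact: rectangle_atom_prod_sigma_setI sA sF sG atomC (atomsH C atomC).
Qed.
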